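(* Let $(\mathscr N,K)$ be a power law kinetic system with a decomposition $\mathscr D:\mathscr N=\mathscr N_1\cup\cdots\cup\mathscr N_k$ such that each subsystem $(\mathscr N_i,K_i)$ is a weakly reversible, complex balanced PL-RDK system of CLP type with $P_{Z,i}=\widetilde S_i$. If $\mathscr D$ is incidence independent and the induced covering $\widetilde{\mathscr D}$ is independent, then $(\mathscr N,K)$ is a weakly reversible CLP system with $P_Z=\sum_{i=1}^k\widetilde S_i$.
   Context: A CRN $\mathscr N=(\mathscr S,\mathscr C,\mathscr R)$ has species $\mathscr S$, complexes $\mathscr C$ (vectors in $\mathbb Z_{\ge0}^{\mathscr S}$) and reactions $\mathscr R$; it is weakly reversible if every connected component of its reaction graph is strongly connected. A decomposition is given by a partition $\{\mathscr R_1,\dots,\mathscr R_k\}$ of $\mathscr R$, $\mathscr N_i$ having reactions $\mathscr R_i$ and complexes $\mathscr C_i$ those occurring in $\mathscr R_i$; $K_i$ is the restriction of the kinetics $K$ to $\mathscr R_i$. A power law kinetics assigns to reaction $R_j$ the rate $K_j(x)=k_jx^{F_{j,\cdot}}=k_j\prod_{s}x_s^{F_{js}}$ with $k_j>0$ and real kinetic order matrix $F$ (rows indexed by reactions). It is PL-RDK (reactant-determined) if any two reactions with the same reactant complex have identical rows of $F$; then each reactant complex $y$ has a kinetic complex $\widetilde y$ (the common row). The incidence map $I_a:\mathbb R^{\mathscr R}\to\mathbb R^{\mathscr C}$ sends $y\to y'$ to $\omega_{y'}-\omega_y$; $Z_+(\mathscr N,K)=\{x\in\mathbb R^{\mathscr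 S}_{>0}: I_aK(x)=0\}$ is the set of complex balanced equilibria, and the system is complex balanced if this set is nonempty. A system is of CLP type with subspace $P_Z\subseteq\mathbb R^{\mathscr S}$ if $Z_+\neq\varnothing$ and $Z_+=\{x\in\mathbb R^{\mathscr S}_{>0}:\log x-\log x^*\in P_Z^{\perp}\}$ for some (any) $x^*\in Z_+$. For a weakly reversible PL-RDK subsystem $(\mathscr N_i,K_i)$, its network of kinetic complexes $\widetilde{\mathscr N}_i$ has reactions $\widetilde y\to\widetilde{y'}$ for each $y\to y'\in\mathscr R_i$, and its kinetic order subspace is $\widetilde S_i=\operatorname{span}\{\widetilde{y'}-\widetilde y: y\to y'\in\mathscr R_i\}$. The induced covering $\widetilde{\mathscr D}$ is $\widetilde{\mathscr N}_{\mathscr D}=\widetilde{\mathscr N}_1\cup\cdots\cup\widetilde{\mathscr N}_k$; it is independent if the stoichiometric subspace of $\widetilde{\mathscr N}_{\mathscr D}$ (which is $\sum_i\widetilde S_i$) is the direct sum of the $\widetilde S_i$. $\mathscr D$ is incidence independent if $\operatorname{Im}I_a$ is the direct sum of the images of the incidence maps of the $\mathscr N_i$. *)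

From HB Require Import structures.
From mathcomp Require Import all_boot all_order all_algebra.
From mathcomp Require Import all_classical all_reals exp.
Set Implicit Arguments. Unset Strict Implicit. Unset Printing Implicit Defensive.
Import Order.TTheory GRing.Theory Num.Theory.
Local Open Scope ring_scope.

(* A chemical reaction network with species 'I_n, reactions 'I_r and
   complexes 'I_c.  Complex i is the vector [cplx i] in Z_{>=0}^S; reaction j
   is  src j -> tgt j. *)
Record CRN (n r c : nat) := {
  cplx : 'I_c -> {ffun 'I_n -> nat};
  src : 'I_r -> 'I_c;
  tgt : 'I_r -> 'I_c;
  cplx_inj : injective cplx;
  no_loop : forall j, src j != tgt j;
  rxn_inj : forall j1 j2, src j1 = src j2 -> tgt j1 = tgt j2 -> j1 = j2;
  cplx_occurs : forall y, exists j, (src j == y) || (tgt j == y)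
}.

Section CRNDefs.
Variables (R : realType) (n r c : nat) (N : CRN n r c).

(* A subnetwork is given by a set P of reactions; its complexes are those
   occurring in its reactions.  P = predT gives N itself. *)

Definition redge (P : pred 'I_r) : rel 'I_c :=
  fun y1 y2 => [exists j, [&& P j, src N j == y1 & tgt N j == y2]].
Definition uedge (P : pred 'I_r) : rel 'I_c :=
  fun y1 y2 => redge P y1 y2 || redge P y2 y1.

(* weakly reversible: each connected component of the reaction graph is
   strongly connected.  (Complexes not occurring in P are isolated vertices,
   which are trivially strongly connected components.) *)
Definition weakly_reversible (P : pred 'I_r) : Prop :=
  forall y1 y2, connect (uedge P) y1 y2 -> connect (redge P) y1 y2.

Definition PLK (k : 'I_r -> R) (F : 'M[R]_(r, n)) (j : 'I_r) (x : 'I_n -> R) : R :=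
  k j * \prod_(s < n) (x s) `^ (F j s).

Definition PL_RDK (F : 'M[R]_(r, n)) (P : pred 'I_r) : Prop :=
  forall j1 j2, P j1 -> P j2 -> src N j1 = src N j2 -> row j1 F = row j2 F.

(* incidence map of the subnetwork P (as a matrix whose rows are the images
   I_a(e_j) = omega_{tgt j} - omega_{src j} for j in P, zero otherwise);
   its row space is Im I_a of the subnetwork, inside R^C *)
Definition incidence_mx (P : pred 'I_r) : 'M[R]_(r, c) :=
  \matrix_(j, y) (if P j then (tgt N j == y)%:R - (src N j == y)%:R else 0).

Definition IaK (k : 'I_r -> R) (F : 'M[R]_(r, n)) (P : pred 'I_r)
    (x : 'I_n -> R) (y : 'I_c) : R :=
  \sum_(j | P j) PLK k F j x * ((tgt N j == y)%:R - (src N j == y)%:R).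

Definition Zplus (k : 'I_r -> R) (F : 'M[R]_(r, n)) (P : pred 'I_r)
    (x : 'I_n -> R) : Prop :=
  (forall s, 0 < x s) /\ (forall y, IaK k F P x y = 0).

Definition complex_balanced k F P : Prop := exists x, Zplus k F P x.

Definition in_orth m (v : 'rV[R]_n) (A : 'M[R]_(m, n)) : bool := v *m A^T == 0.

(* CLP type with subspace P_Z = row space of A *)
Definition CLP m k F P (A : 'M[R]_(m, n)) : Prop :=
  exists xs, Zplus k F P xs /\
    forall x, Zplus k F P x <->
      ((forall s, 0 < x s) /\
       in_orth (\row_s (ln (x s) - ln (xs s))) A).

(* kinetic complex of a reactant complex y of the PL-RDK subnetwork P: the
   common kinetic-order row of the reactions of P with reactant y *)
Definition kin_cplx (F : 'M[R]_(r, n)) (P : pred 'I_r) (y : 'I_c) : 'rV[R]_n :=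
  if [pick j | P j && (src N j == y)] is Some j then row j F else 0.

(* kinetic order subspace S~_P = span{ y~' - y~ : y -> y' in P } (row space) *)
Definition kin_order_mx (F : 'M[R]_(r, n)) (P : pred 'I_r) : 'M[R]_(r, n) :=
  \matrix_j (if P j then kin_cplx F P (tgt N j) - kin_cplx F P (src N j) else 0).

End CRNDefs.

Definition block (r m : nat) (p : 'I_r -> 'I_m) (i : 'I_m) : pred 'I_r :=
  fun j => p j == i.

From HB Require Import structures.
From mathcomp Require Import all_boot all_order all_algebra.
From mathcomp Require Import all_classical all_reals sequences exp.
Import Order.TTheory GRing.Theory Num.Theory.
Local Open Scope ring_scope.

(* Every edge of the whole network is an edge of some subnetwork,
   and weak reversibility of that subnetwork closes it into a directed cycle.
   Since Im I_a is the direct sum of the images of the subnetworks, the vector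
   I_a K(x) = sum_i I_a^i K_i(x) vanishes iff each summand does, so
   Z_+(N) is the intersection of the Z_+(N_i), i.e. of the sets
   { x > 0 : log x - log x_i in S~_i^perp }.  Independence of the S~_i lets
   one pick a single u with u - log x_i in S~_i^perp for every i; with
   x* = exp u this intersection becomes { x > 0 : log x - log x* in
   (sum_i S~_i)^perp }. *)

Section DirectSums.
Set Implicit Arguments. Unset Strict Implicit.
Context {K : fieldType}.

Lemma mxdirect_sum_eq0 (m n : nat) (B : 'I_m -> 'M[K]_n) (v : 'I_m -> 'rV[K]_n) :
  mxdirect (\sum_(i < m) B i)%MS -> (forall i, v i <= B i)%MS ->
  \sum_(i < m) v i = 0 -> forall i, v i = 0.
Proof.
move=> dxB sBv sv0 i.
have [w _ _ w_uniq] := sub_dsumsmx dxB (sub0mx 1 (\sum_(i < m) B i)%MS).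
have -> : v i = w i by apply: w_uniq => //; rewrite sv0.
by symmetry; apply: (w_uniq (fun=> 0)) => // [j _|]; rewrite ?sub0mx ?big1.
Qed.

Lemma mul_tr_sumsmx_eq0 (m a n : nat) (A : 'I_m -> 'M[K]_(a, n)) (v : 'rV[K]_n) :
  (v *m (\sum_(i < m) <<A i>>)%MS^T == 0) = [forall i, v *m (A i)^T == 0].
Proof.
have trE l (M : 'M[K]_(l, n)) : (v *m M^T == 0) = (M <= kermx v^T)%MS.
  by rewrite sub_kermx -trmx_eq0 trmx_mul trmxK.
rewrite trE; apply/sumsmx_subP/forallP => [sAv i | sAv i _].
  by rewrite trE -genmxE sAv.
by rewrite genmxE -trE.
Qed.

(* The projections onto the summands along the others give
   u := sum_i w_i Q_i^T, and A_j Q_i vanishes unless i = j. *)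
Lemma mxdirect_sums_interpolate (m a n : nat) (A : 'I_m -> 'M[K]_(a, n))
    (w : 'I_m -> 'rV[K]_n) :
  mxdirect (\sum_(i < m) <<A i>>)%MS ->
  exists u : 'rV[K]_n, forall i, u *m (A i)^T = w i *m (A i)^T.
Proof.
move=> /mxdirect_sumsP dxA.
pose Q i := proj_mx <<A i>>%MS (\sum_(j | true && (j != i)) <<A j>>)%MS.
have AQ i j : A j *m Q i = if i == j then A j else 0.
  have [<-|/negbTE ij] := eqVneq i j; first by rewrite proj_mx_id ?genmxE ?dxA.
  by rewrite proj_mx_0 ?dxA // (sumsmx_sup j) ?genmxE // eq_sym ij.
exists (\sum_i w i *m (Q i)^T) => j.
rewrite mulmx_suml (bigD1 j) //= big1 => [|i ij].
  by rewrite -mulmxA -trmx_mul AQ eqxx addr0.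
by rewrite -mulmxA -trmx_mul AQ (negbTE ij) trmx0 mulmx0.
Qed.

End DirectSums.

Section Decomposition.
Set Implicit Arguments. Unset Strict Implicit.
Variables (R : realType) (n r c : nat) (N : CRN n r c).
Variables (m : nat) (p : 'I_r -> 'I_m).

Lemma connect_redge_sub (P Q : pred 'I_r) :
  subpred P Q -> subrel (connect (redge N P)) (connect (redge N Q)).
Proof.
move=> sPQ; apply: connect_sub => y1 y2 /existsP [j /and3P [Pj /eqP <- /eqP <-]].
by apply: connect1; apply/existsP; exists j; rewrite sPQ ?eqxx.
Qed.

Lemma weakly_reversible_blocks :
  (forall i, weakly_reversible N (block p i)) -> weakly_reversible N predT.
Proof.
move=> wrN y1 y2; apply: connect_sub => a b /orP [ab | /existsP [j]].
  exact: connect1.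
move=> /and3P [_ /eqP ja /eqP jb].
have ab : connect (redge N (block p (p j))) a b.
  apply: wrN; apply/connect1/orP; right; apply/existsP; exists j.
  by rewrite /block ja jb !eqxx.
exact: connect_redge_sub ab.
Qed.

Variables (k : 'I_r -> R) (F : 'M[R]_(r, n)).

Lemma IaK_rowE (P : pred 'I_r) (x : 'I_n -> R) :
  \row_y IaK N k F P x y = (\row_j PLK k F j x) *m incidence_mx R N P.
Proof.
apply/rowP => y; rewrite !mxE /IaK big_mkcond.
by apply: eq_bigr => j _; rewrite !mxE; case: (P j); rewrite ?mulr0.
Qed.

Lemma IaK_blocks (x : 'I_n -> R) (y : 'I_c) :
  IaK N k F predT x y = \sum_(i < m) IaK N k F (block p i) x y.
Proof. exact: (partition_big p predT). Qed.

Lemma Zplus_blocks (x : 'I_n -> R) :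
  mxdirect (\sum_(i < m) <<incidence_mx R N (block p i)>>)%MS ->
  Zplus N k F predT x <->
    (forall s, 0 < x s) /\ forall i, Zplus N k F (block p i) x.
Proof.
move=> dxI; split=> [[x_gt0 Ia0] | [x_gt0 Zx]]; last first.
  by split=> // y; rewrite IaK_blocks big1 // => i _; case: (Zx i).
split=> // i; split=> // y.
pose v j : 'rV[R]_c := \row_y IaK N k F (block p j) x y.
have sv0 : \sum_i v i = 0.
  apply/rowP => y'; rewrite summxE mxE -[RHS](Ia0 y') IaK_blocks.
  by apply: eq_bigr => j _; rewrite mxE.
have sIv j : (v j <= <<incidence_mx R N (block p j)>>)%MS.
  by rewrite genmxE /v IaK_rowE submxMl.
by move: (mxdirect_sum_eq0 dxI sIv sv0 i) => /rowP /(_ y); rewrite !mxE.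
Qed.

Definition ln_row (x : 'I_n -> R) : 'rV[R]_n := \row_s ln (x s).

Lemma row_ln_subE (x y : 'I_n -> R) :
  \row_s (ln (x s) - ln (y s)) = ln_row x - ln_row y.
Proof. by apply/rowP => s; rewrite !mxE. Qed.

Lemma ln_row_expR (u : 'rV[R]_n) : ln_row (fun s => expR (u 0 s)) = u.
Proof. by apply/rowP => s; rewrite mxE expRK. Qed.

Lemma CLP_blocks (A : 'I_m -> 'M[R]_(r, n)) :
  mxdirect (\sum_(i < m) <<A i>>)%MS ->
  (forall x, Zplus N k F predT x <->
     (forall s, 0 < x s) /\ forall i, Zplus N k F (block p i) x) ->
  (forall i, CLP N k F (block p i) (A i)) ->
  CLP N k F predT (\sum_(i < m) <<A i>>)%MS.
Proof.
move=> dxA Zx CLPi.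
have [xs CLPxs] := choice (fun i => CLPi i).
have [u Au] := mxdirect_sums_interpolate (fun i => ln_row (xs i)) dxA.
have orth_u x i : in_orth (ln_row x - ln_row (xs i)) (A i) =
                  in_orth (ln_row x - u) (A i).
  by rewrite /in_orth !mulmxBl Au.
have Zx_u x : Zplus N k F predT x <->
    (forall s, 0 < x s) /\ in_orth (ln_row x - u) (\sum_(i < m) <<A i>>)%MS.
  rewrite Zx /in_orth mul_tr_sumsmx_eq0.
  split=> [[x_gt0 Zxi] | [x_gt0 /forallP ux]].
    split=> //; apply/forallP => i.
    by have [_] := ((CLPxs i).2 x).1 (Zxi i); rewrite row_ln_subE orth_u.
  split=> // i; apply/(CLPxs i).2; split=> //.
  by rewrite row_ln_subE orth_u; apply: ux.
exists (fun s => expR (u 0 s)); split => [|x]; rewrite Zx_u.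
  by split=> [s|]; rewrite ?expR_gt0 // ln_row_expR /in_orth subrr mul0mx.
by rewrite row_ln_subE ln_row_expR.
Qed.

End Decomposition.

Theorem theorem10 (R : realType) (n r c : nat) (N : CRN n r c)
    (k : 'I_r -> R) (F : 'M[R]_(r, n)) (kpos : forall j, 0 < k j)
    (m : nat) (p : 'I_r -> 'I_m) (psurj : forall i, exists j, p j = i)
    (Hsub : forall i : 'I_m,
       [/\ weakly_reversible N (block p i),
           complex_balanced N k F (block p i),
           PL_RDK N F (block p i) &
           CLP N k F (block p i) (kin_order_mx N F (block p i))])
    (Hinc : mxdirect (\sum_(i < m) <<incidence_mx R N (block p i)>>)%MS)
    (Hcov : mxdirect (\sum_(i < m) <<kin_order_mx N F (block p i)>>)%MS) :
  weakly_reversible N predT /\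
  CLP N k F predT (\sum_(i < m) <<kin_order_mx N F (block p i)>>)%MS.
Proof.
split.
  by apply: (weakly_reversible_blocks (p := p)) => i; case: (Hsub i).
apply: (CLP_blocks (p := p) Hcov) => [x | i]; first exact: Zplus_blocks Hinc.
by case: (Hsub i).
Qed.
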